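(* Let $D_n$ be the degree (in-degree) of the sink in a random series-parallel network of size $n$ generated by the binary model. Then for $n\ge1$ $$\mathbb{E}(D_n)=\frac{1+\sqrt2}{2}\binom{n+\sqrt2-2}{n-1}-\frac{\sqrt2-1}{2}\binom{n-\sqrt2-2}{n-1},$$ and consequently $\mathbb{E}(D_n)\sim\frac{1+\sqrt2}{2}\frac{n^{\sqrt2-1}}{\Gamma(\sqrt2)}$ as $n\to\infty$.
   Context: Binary (uniform binary saturation) model of series-parallel networks: directed graphs with a source and a sink, edges oriented towards the sink. At step $1$ the network is a single edge from the source to the sink. At step $n>1$ one of the $n-1$ edges $(x,y)$ is chosen uniformly at random. If $x$ has out-degree $1$, a new parallel edge $(x,y)$ is added; if $x$ has out-degree $2$, $(x,y)$ is replaced by $(x,z),(z,y)$ with $z$ a new vertex. The network after step $n$ has size $n$ ($n$ edges). Binomial coefficients with real upper argument: $\binom{a}{k}=a(a-1)\cdots(a-k+1)/k!$. *)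

From Stdlib Require Import Reals Lra Lia Arith List.
Import ListNotations.
Open Scope R_scope.

(* A network: list of directed edges (x,y) between vertices (nats), together
   with the next fresh vertex label.  Source = vertex 0, sink = vertex 1. *)
Definition network : Type := (list (nat * nat) * nat)%type.

Definition source : nat := 0%nat.
Definition sink : nat := 1%nat.

Definition net1 : network := ([(source, sink)], 2%nat).

Definition edges (G : network) : list (nat * nat) := fst G.

Definition outdeg (G : network) (v : nat) : nat :=
  length (filter (fun e => Nat.eqb (fst e) v) (edges G)).

Definition indeg (G : network) (v : nat) : nat :=
  length (filter (fun e => Nat.eqb (snd e) v) (edges G)).

Fixpoint replace_nth {A : Type} (l : list A) (i : nat) (a : A) : list A :=
  match l, i with
  | [], _ => []
  | _ :: t, O => a :: t
  | h :: t, S j => h :: replace_nth t j a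
  end.

Definition grow (G : network) (i : nat) : network :=
  let (es, z) := G in
  let (x, y) := nth i es (0%nat, 0%nat) in
  if Nat.eqb (outdeg G x) 1
  then (es ++ [(x, y)], z)                                  (* parallel edge *)
  else (replace_nth es i (x, z) ++ [(z, y)], S z).          (* subdivision *)

Definition Rsum_list (l : list R) : R := fold_right Rplus 0 l.

Fixpoint expect_after (s : nat) (f : network -> R) (G : network) : R :=
  match s with
  | O => f G
  | S s' =>
      / INR (length (edges G)) *
      Rsum_list (map (fun i => expect_after s' f (grow G i))
                     (seq 0 (length (edges G))))
  end.

(* E(D_n): expected in-degree of the sink in the network of size n
   (i.e. after step n, i.e. after n-1 growth steps from net1). *)
Definition ED (n : nat) : R :=
  expect_after (n - 1) (fun G => INR (indeg G sink)) net1.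

Fixpoint falling (a : R) (k : nat) : R :=
  match k with
  | O => 1
  | S j => falling a j * (a - INR j)
  end.

Definition gbinom (a : R) (k : nat) : R := falling a k / INR (fact k).

(* Euler's limit sequence for the Gamma function:
   Gamma(x) = lim_m m! m^x / (x (x+1) ... (x+m)),  x > 0. *)
Fixpoint rising_prod (x : R) (m : nat) : R :=
  match m with
  | O => x
  | S j => rising_prod x j * (x + INR (S j))
  end.

Definition gamma_seq (x : R) (m : nat) : R :=
  INR (fact m) * Rpower (INR m) x / rising_prod x m.

(* Call an edge into the sink of type k (k = 1, 2) when its tail has out-degree k, and
   let A and B count the sink edges of type 1 and 2, so that D = A + B.  Choosing an edge
   changes (A, B) by (-1, 2) if it is a sink edge of type 1, by (1, -1) if it is one of
   type 2, and not at all otherwise.  Hence for an eigenvector (a, b) of [[-1, 2], [1, -1]]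
   with eigenvalue l = sqrt 2 - 1 or - sqrt 2 - 1, the expectation of aA + bB is
   multiplied by 1 + l/n at the step from size n.  Starting from A = 1, B = 0, E(D_n) is
   thus a combination of the products prod_(j < n) (1 + l/j) = binom(n + l - 1, n - 1).
   Comparing the first with Euler's product m! m^x / (x (x+1) ... (x+m)) for Gamma(x)
   gives the asymptotics; the second product is O(1/n). *)

From Stdlib Require Import Reals Lra Lia Arith List.
From Coquelicot Require Import Coquelicot.
Import ListNotations.
Open Scope nat_scope.

Definition weight_sum (h : nat * nat -> nat) (l : list (nat * nat)) : nat :=
  list_sum (map h l).

Lemma weight_sum_app h l1 l2 :
  weight_sum h (l1 ++ l2) = weight_sum h l1 + weight_sum h l2.
Proof. unfold weight_sum; now rewrite map_app, list_sum_app. Qed.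

Lemma weight_sum_cons h e l : weight_sum h (e :: l) = h e + weight_sum h l.
Proof. reflexivity. Qed.

Lemma weight_sum_ext_in h h' l :
  (forall e, In e l -> h e = h' e) -> weight_sum h l = weight_sum h' l.
Proof. intros H; unfold weight_sum; now rewrite (map_ext_in h h' l H). Qed.

Lemma length_filter_weight_sum (p : nat * nat -> bool) l :
  length (filter p l) = weight_sum (fun e => if p e then 1 else 0) l.
Proof.
  unfold weight_sum; induction l as [|e l IH]; simpl; [reflexivity|].
  destruct (p e); simpl; lia.
Qed.

Lemma weight_sum_add h1 h2 l :
  weight_sum (fun e => h1 e + h2 e) l = weight_sum h1 l + weight_sum h2 l.
Proof. unfold weight_sum; induction l as [|e l IH]; simpl; lia. Qed.

Definition out_count (l : list (nat * nat)) (v : nat) : nat :=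
  weight_sum (fun e => if fst e =? v then 1 else 0) l.

Lemma outdeg_out_count l z v : outdeg (l, z) v = out_count l v.
Proof. apply length_filter_weight_sum. Qed.

Lemma out_count_app l1 l2 v :
  out_count (l1 ++ l2) v = out_count l1 v + out_count l2 v.
Proof. apply weight_sum_app. Qed.

Lemma out_count_cons e l v :
  out_count (e :: l) v = (if fst e =? v then 1 else 0) + out_count l v.
Proof. reflexivity. Qed.

Lemma out_count_pos l e : In e l -> (1 <= out_count l (fst e)).
Proof.
  induction l as [|a l IH]; intros He; [destruct He|].
  rewrite out_count_cons. destruct He as [<-|He].
  - rewrite Nat.eqb_refl; lia.
  - specialize (IH He); lia.
Qed.

Lemma out_count_zero l v : out_count l v = 0 -> forall e, In e l -> fst e <> v.
Proof.
  intros H e He Ev. pose proof (out_count_pos l e He). rewrite Ev in *. lia.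
Qed.

Lemma out_count_fresh l z : (forall e, In e l -> (fst e < z)) -> out_count l z = 0.
Proof.
  induction l as [|e l IH]; intros H; [reflexivity|]. rewrite out_count_cons.
  destruct (Nat.eqb_spec (fst e) z) as [E|_].
  - specialize (H e (or_introl eq_refl)); lia.
  - apply IH; intros e' He'; apply H; now right.
Qed.

Definition sink_weight (k : nat) (d : nat -> nat) (e : nat * nat) : nat :=
  if ((snd e =? sink) && (d (fst e) =? k))%bool then 1 else 0.

Definition sink_count (k : nat) (l : list (nat * nat)) : nat :=
  weight_sum (sink_weight k (out_count l)) l.

Record well_formed (G : network) : Prop := {
  out_count_le2 : forall v, (out_count (edges G) v <= 2);
  tail_lt_fresh : forall e, In e (edges G) -> (fst e < snd G);
  sink_lt_fresh : (sink < snd G) }.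

Lemma well_formed_net1 : well_formed net1.
Proof.
  split; simpl.
  - intros v; unfold out_count, weight_sum; simpl.
    destruct v; lia.
  - intros e [<-|[]]; unfold source; simpl; lia.
  - unfold sink; lia.
Qed.

Lemma indeg_sink_split G : well_formed G ->
  indeg G sink = sink_count 1 (edges G) + sink_count 2 (edges G).
Proof.
  intros WF. unfold indeg, sink_count. rewrite length_filter_weight_sum.
  rewrite <- weight_sum_add. apply weight_sum_ext_in. intros e He.
  pose proof (out_count_pos _ _ He). pose proof (out_count_le2 G WF (fst e)).
  unfold sink_weight. destruct (snd e =? sink); simpl; [|reflexivity].
  destruct (Nat.eqb_spec (out_count (edges G) (fst e)) 1),
           (Nat.eqb_spec (out_count (edges G) (fst e)) 2); lia.
Qed.

Lemma out_count_replace l1 l2 x y y1 w y2 v :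
  out_count (l1 ++ (x, y1) :: l2 ++ [(w, y2)]) v =
  out_count (l1 ++ (x, y) :: l2) v + (if w =? v then 1 else 0).
Proof. rewrite !out_count_app, !out_count_cons, out_count_app; cbn; lia. Qed.

Lemma sink_weight_agree k d d' l :
  (forall e, In e l -> d (fst e) = d' (fst e)) ->
  weight_sum (sink_weight k d) l = weight_sum (sink_weight k d') l.
Proof.
  intros H. apply weight_sum_ext_in. intros e He. unfold sink_weight. now rewrite H.
Qed.

(* Both growth moves have this shape: a parallel edge with [y1 = y], [w = x], [y2 = y],
   a subdivision with [y1 = w = z], [y2 = y]. *)
Lemma sink_count_replace k l1 l2 x y y1 w y2 :
  (forall e, In e (l1 ++ l2) -> fst e <> w) ->
  let l := l1 ++ (x, y) :: l2 in
  let l' := l1 ++ (x, y1) :: l2 ++ [(w, y2)] in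
  sink_count k l' + sink_weight k (out_count l) (x, y) =
  sink_count k l + sink_weight k (out_count l') (x, y1) + sink_weight k (out_count l') (w, y2).
Proof.
  intros Hw l l'.
  assert (Hagree : forall e, In e (l1 ++ l2) -> out_count l' (fst e) = out_count l (fst e)).
  { intros e He. unfold l', l. rewrite (out_count_replace _ _ _ y).
    destruct (Nat.eqb_spec w (fst e)) as [E|_]; [now destruct (Hw e He)|lia]. }
  unfold sink_count. fold l l'. set (d := out_count l). set (d' := out_count l').
  unfold l', l.
  rewrite !weight_sum_app, !weight_sum_cons, weight_sum_app, weight_sum_cons.
  rewrite (sink_weight_agree k d' d l1), (sink_weight_agree k d' d l2)
    by (intros e He; apply Hagree, in_or_app; tauto).
  change (weight_sum _ []) with 0. lia.
Qed.

Lemma replace_nth_middle (l1 l2 : list (nat * nat)) e e' :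
  replace_nth (l1 ++ e :: l2) (length l1) e' = l1 ++ e' :: l2.
Proof. induction l1 as [|a l1 IH]; simpl; [reflexivity|]. now rewrite IH. Qed.

Lemma grow_cases G i : well_formed G -> i < length (edges G) ->
  exists l1 l2 x y, edges G = l1 ++ (x, y) :: l2 /\ nth i (edges G) (0, 0) = (x, y) /\
    ((out_count (edges G) x = 1 /\
      grow G i = (l1 ++ (x, y) :: l2 ++ [(x, y)], snd G)) \/
     (out_count (edges G) x = 2 /\
      grow G i = (l1 ++ (x, snd G) :: l2 ++ [(snd G, y)], S (snd G)))).
Proof.
  destruct G as [es z]; unfold edges; simpl. intros WF Hi.
  destruct (nth_split es (0, 0) Hi) as (l1 & l2 & Hes & <-).
  destruct (nth (length l1) es (0, 0)) as [x y] eqn:Ee. subst es.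
  exists l1, l2, x, y. split; [reflexivity|split; [reflexivity|]].
  rewrite outdeg_out_count.
  pose proof (out_count_pos (l1 ++ (x, y) :: l2) (x, y) (in_elt _ _ _)).
  pose proof (out_count_le2 _ WF x). simpl in *.
  destruct (Nat.eqb_spec (out_count (l1 ++ (x, y) :: l2) x) 1).
  - left. split; [assumption|]. now rewrite <- app_assoc.
  - right. split; [lia|]. now rewrite replace_nth_middle, <- app_assoc.
Qed.

Lemma grow_well_formed G i : well_formed G -> i < length (edges G) ->
  well_formed (grow G i) /\ length (edges (grow G i)) = S (length (edges G)).
Proof.
  intros WF Hi. destruct (grow_cases G i WF Hi) as (l1 & l2 & x & y & Hes & _ & Hcase).
  destruct G as [es z]; unfold edges in *; simpl in *; subst es.
  pose proof (out_count_le2 _ WF) as Hle. pose proof (tail_lt_fresh _ WF) as Htl.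
  pose proof (sink_lt_fresh _ WF) as Hsk. simpl in Hle, Htl, Hsk.
  assert (Hx : x < z) by exact (Htl (x, y) (in_elt _ _ _)).
  destruct Hcase as [[Hx1 ->]|[Hx2 ->]]; simpl; (split; [split|]); simpl.
  - intros v. rewrite (out_count_replace _ _ _ y). specialize (Hle v).
    destruct (Nat.eqb_spec x v); subst; lia.
  - intros e He. rewrite app_comm_cons, app_assoc in He.
    apply in_app_or in He as [He|[<-|[]]]; [apply Htl, He|exact Hx].
  - exact Hsk.
  - rewrite !length_app; simpl; rewrite length_app; simpl; lia.
  - intros v. rewrite (out_count_replace _ _ _ y). specialize (Hle v).
    pose proof (out_count_fresh _ _ Htl).
    destruct (Nat.eqb_spec z v); subst; lia.
  - intros e He. apply in_app_or in He as [He|[<-|He]]; simpl.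
    + enough (fst e < z) by lia. apply Htl, in_or_app; now left.
    + lia.
    + apply in_app_or in He as [He|[<-|[]]]; simpl; [|lia].
      enough (fst e < z) by lia. apply Htl, in_or_app; right; now right.
  - lia.
  - rewrite !length_app; simpl; rewrite length_app; simpl; lia.
Qed.

Lemma grow_sink_count G i : well_formed G -> i < length (edges G) ->
  let a := sink_weight 1 (out_count (edges G)) (nth i (edges G) (0, 0)) in
  let b := sink_weight 2 (out_count (edges G)) (nth i (edges G) (0, 0)) in
  (sink_count 1 (edges (grow G i)) + a = sink_count 1 (edges G) + b) /\
  (sink_count 2 (edges (grow G i)) + b = sink_count 2 (edges G) + 2 * a).
Proof.
  intros WF Hi a b. subst a b.
  destruct (grow_cases G i WF Hi) as (l1 & l2 & x & y & Hes & -> & Hcase).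
  destruct G as [es z]; unfold edges in *; simpl in *; subst es.
  destruct Hcase as [[Hx1 ->]|[Hx2 ->]]; simpl.
  - assert (Hw : forall e, In e (l1 ++ l2) -> fst e <> x).
    { apply out_count_zero. rewrite out_count_app.
      rewrite out_count_app, out_count_cons, Nat.eqb_refl in Hx1. simpl in Hx1. lia. }
    pose proof (sink_count_replace 1 _ _ x y y x y Hw) as C1.
    pose proof (sink_count_replace 2 _ _ x y y x y Hw) as C2.
    simpl in C1, C2. unfold sink_weight in *. simpl in *.
    rewrite (out_count_replace _ _ _ y), Nat.eqb_refl, Hx1 in C1, C2. rewrite Hx1.
    destruct (y =? sink); simpl in *; lia.
  - pose proof (tail_lt_fresh _ WF) as Htl. pose proof (sink_lt_fresh _ WF) as Hsk.
    simpl in Htl, Hsk.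
    assert (Hx : x < z) by exact (Htl (x, y) (in_elt _ _ _)).
    assert (Hw : forall e, In e (l1 ++ l2) -> fst e <> z).
    { intros e He. enough (fst e < z) by lia.
      apply Htl. apply in_app_or in He as [He|He]; apply in_or_app; simpl; tauto. }
    pose proof (sink_count_replace 1 _ _ x y z z y Hw) as C1.
    pose proof (sink_count_replace 2 _ _ x y z z y Hw) as C2.
    simpl in C1, C2. unfold sink_weight in *. simpl in *.
    rewrite !(out_count_replace _ _ _ y), Nat.eqb_refl, Hx2, (out_count_fresh _ _ Htl)
      in C1, C2.
    rewrite Hx2.
    destruct (Nat.eqb_spec z x); [lia|]. destruct (Nat.eqb_spec z sink); [lia|].
    destruct (y =? sink); simpl in *; lia.
Qed.

Definition well_formed_size (n : nat) (G : network) : Prop :=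
  well_formed G /\ length (edges G) = n.

Lemma well_formed_size_grow n G i :
  well_formed_size n G -> i < n -> well_formed_size (S n) (grow G i).
Proof.
  intros [WF <-] Hi. exact (grow_well_formed G i WF Hi).
Qed.

Lemma well_formed_size_net1 : well_formed_size 1 net1.
Proof. split; [exact well_formed_net1|reflexivity]. Qed.

Open Scope R_scope.

Lemma INR_S_pos m : 0 < INR (S m).
Proof. apply lt_0_INR, Nat.lt_0_succ. Qed.

Lemma Rsum_list_map_ext (f g : nat -> R) l :
  (forall i, In i l -> f i = g i) -> Rsum_list (map f l) = Rsum_list (map g l).
Proof. intros H. now rewrite (map_ext_in f g l H). Qed.

Lemma Rsum_list_map_lin (f g : nat -> R) a b l :
  Rsum_list (map (fun i => a * f i + b * g i) l) =
  a * Rsum_list (map f l) + b * Rsum_list (map g l).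
Proof. induction l as [|i l IH]; simpl; [ring|]. rewrite IH. ring. Qed.

Lemma Rsum_list_affine_weights (h1 h2 : nat * nat -> nat) c a b l :
  Rsum_list (map (fun i => c + a * INR (h1 (nth i l (0, 0)%nat))
                             + b * INR (h2 (nth i l (0, 0)%nat))) (seq 0 (length l))) =
  INR (length l) * c + a * INR (weight_sum h1 l) + b * INR (weight_sum h2 l).
Proof.
  induction l as [|e l IH]; [simpl; ring|].
  simpl length. rewrite <- cons_seq, <- seq_shift, map_cons, map_map. simpl nth.
  simpl Rsum_list. rewrite IH, !weight_sum_cons, !plus_INR, S_INR. ring.
Qed.

Definition step_mean (f : network -> R) (G : network) : R :=
  / INR (length (edges G)) *
  Rsum_list (map (fun i => f (grow G i)) (seq 0 (length (edges G)))).

Lemma expect_after_succ s : forall f G,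
  expect_after (S s) f G = expect_after s (step_mean f) G.
Proof.
  induction s as [|s IH]; intros f G; [reflexivity|].
  cbn [expect_after]. f_equal. apply Rsum_list_map_ext. intros i _. apply IH.
Qed.

Lemma expect_after_ext s : forall n G f g, well_formed_size n G ->
  (forall H, well_formed_size (s + n) H -> f H = g H) ->
  expect_after s f G = expect_after s g G.
Proof.
  induction s as [|s IH]; intros n G f g HG Hfg; simpl; [now apply Hfg|].
  f_equal. apply Rsum_list_map_ext. intros i Hi. apply in_seq in Hi.
  apply (IH (S n)); [apply well_formed_size_grow; [exact HG|destruct HG as [_ HL]; lia]|].
  intros H HH. apply Hfg. now rewrite Nat.add_succ_comm.
Qed.

Lemma expect_after_lin s : forall f g a b G,
  expect_after s (fun H => a * f H + b * g H) G =
  a * expect_after s f G + b * expect_after s g G.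
Proof.
  induction s as [|s IH]; intros f g a b G; simpl; [reflexivity|].
  rewrite (Rsum_list_map_ext _ (fun i => a * expect_after s f (grow G i)
                                         + b * expect_after s g (grow G i)))
    by (intros; apply IH).
  rewrite Rsum_list_map_lin. ring.
Qed.

Definition sink_form (al be : R) (G : network) : R :=
  al * INR (sink_count 1 (edges G)) + be * INR (sink_count 2 (edges G)).

Lemma step_mean_sink_form al be la n G :
  2 * be - al = la * al -> al - be = la * be -> well_formed_size (S n) G ->
  step_mean (sink_form al be) G = (1 + la / INR (S n)) * sink_form al be G.
Proof.
  intros E1 E2 [WF HL]. unfold step_mean. rewrite HL.
  set (l := edges G) in *. set (d := out_count l).
  set (w k i := INR (sink_weight k d (nth i l (0, 0)%nat))).
  rewrite (Rsum_list_map_ext _ (fun i => sink_form al be G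
      + (2 * be - al) * w 1%nat i + (al - be) * w 2%nat i)).
  2:{ intros i Hi. apply in_seq in Hi.
      destruct (grow_sink_count G i WF) as [C1 C2]; [fold l; lia|].
      apply (f_equal INR) in C1, C2.
      rewrite !plus_INR in C1. rewrite !plus_INR, mult_INR in C2.
      fold l d in C1, C2. fold (w 1%nat i) (w 2%nat i) in C1, C2.
      unfold sink_form. fold l.
      replace (INR (sink_count 1 (edges (grow G i))))
        with (INR (sink_count 1 l) + w 2%nat i - w 1%nat i) by lra.
      replace (INR (sink_count 2 (edges (grow G i))))
        with (INR (sink_count 2 l) + 2 * w 1%nat i - w 2%nat i) by (simpl in C2; lra).
      ring. }
  unfold w. rewrite <- HL, Rsum_list_affine_weights, HL, E1, E2.
  unfold sink_form. fold l. change (weight_sum (sink_weight ?k d) l) with (sink_count k l).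
  assert (0 < INR (S n)) by apply INR_S_pos.
  field. lra.
Qed.

Fixpoint growth (la : R) (s : nat) : R :=
  match s with
  | O => 1
  | S k => growth la k * (1 + la / INR (S k))
  end.

Lemma expect_after_sink_form al be la s :
  2 * be - al = la * al -> al - be = la * be ->
  expect_after s (sink_form al be) net1 = growth la s * al.
Proof.
  intros E1 E2. induction s as [|s IH].
  - unfold sink_form; cbn. ring.
  - rewrite expect_after_succ.
    rewrite (expect_after_ext s 1 net1 _
               (fun G => (1 + la / INR (S s)) * sink_form al be G + 0 * sink_form al be G))
      by (apply well_formed_size_net1 || (intros H HH; rewrite Rmult_0_l, Rplus_0_r;
            apply step_mean_sink_form; [exact E1|exact E2|]; now rewrite <- Nat.add_1_r)).
    rewrite expect_after_lin, IH. cbn [growth]. ring.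
Qed.

Lemma falling_succ_shift k : forall a, falling (a + 1) (S k) = (a + 1) * falling a k.
Proof.
  induction k as [|k IH]; intros a; [simpl; ring|].
  change (falling (a + 1) (S (S k))) with (falling (a + 1) (S k) * (a + 1 - INR (S k))).
  rewrite IH. cbn [falling]. rewrite S_INR. ring.
Qed.

Lemma gbinom_growth a s : gbinom (INR s + a) s = growth a s.
Proof.
  induction s as [|s IH]; [unfold gbinom; simpl; field|].
  cbn [growth]. rewrite <- IH. unfold gbinom.
  replace (INR (S s) + a) with (INR s + a + 1) by (rewrite S_INR; ring).
  rewrite falling_succ_shift, fact_simpl, mult_INR.
  assert (0 < INR (fact s)) by apply lt_0_INR, lt_O_fact.
  assert (0 < INR (S s)) by apply INR_S_pos.
  rewrite S_INR in *. field. lra.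
Qed.

Lemma ED_growth m :
  ED (S m) = (1 + sqrt 2) / 2 * growth (sqrt 2 - 1) m
             - (sqrt 2 - 1) / 2 * growth (- sqrt 2 - 1) m.
Proof.
  set (r := sqrt 2).
  assert (Hr : r * r = 2) by (apply sqrt_sqrt; lra).
  assert (Hr0 : 0 < r) by (apply sqrt_lt_R0; lra).
  unfold ED. replace (S m - 1)%nat with m by lia.
  rewrite (expect_after_ext m 1 net1 _
     (fun G => (r + 1) / (2 * r) * sink_form r 1 G + (r - 1) / (2 * r) * sink_form (- r) 1 G))
    by (apply well_formed_size_net1 || (intros G [WF _];
          rewrite indeg_sink_split, plus_INR by exact WF; unfold sink_form; field; lra)).
  rewrite expect_after_lin, (expect_after_sink_form r 1 (r - 1)),
          (expect_after_sink_form (- r) 1 (- r - 1)) by nra.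
  field. lra.
Qed.

Theorem ED_closed_form n : (1 <= n)%nat ->
  ED n = (1 + sqrt 2) / 2 * gbinom (INR n + sqrt 2 - 2) (n - 1)
         - (sqrt 2 - 1) / 2 * gbinom (INR n - sqrt 2 - 2) (n - 1).
Proof.
  intros Hn. destruct n as [|m]; [lia|]. replace (S m - 1)%nat with m by lia.
  rewrite ED_growth, <- !gbinom_growth, S_INR.
  f_equal; f_equal; f_equal; ring.
Qed.

Lemma exp_le_mono a b : a <= b -> exp a <= exp b.
Proof.
  intros [H|H]; [left; now apply exp_increasing|right; now rewrite H].
Qed.

Lemma ln_le_sub_1 y : 0 < y -> ln y <= y - 1.
Proof. intros Hy. pose proof (exp_ineq1_le (ln y)) as H. rewrite exp_ln in H; lra. Qed.

Lemma rising_prod_pos x m : 0 < x -> 0 < rising_prod x m.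
Proof.
  intros Hx. induction m as [|m IH]; cbn [rising_prod]; [exact Hx|].
  apply Rmult_lt_0_compat; [exact IH|]. pose proof (INR_S_pos m). lra.
Qed.

Lemma gamma_seq_pos x m : 0 < x -> 0 < gamma_seq x m.
Proof.
  intros Hx. unfold gamma_seq. apply Rdiv_lt_0_compat; [|now apply rising_prod_pos].
  apply Rmult_lt_0_compat; [apply lt_0_INR, lt_O_fact|apply exp_pos].
Qed.

Definition log_gap (m : nat) : R := ln (INR (S m)) - ln (INR m).

Lemma log_gap_bounds m : (1 <= m)%nat -> / INR (S m) <= log_gap m <= / INR m.
Proof.
  intros Hm. unfold log_gap.
  assert (H1 : 1 <= INR m) by (apply (le_INR 1); exact Hm).
  rewrite S_INR. split.
  - pose proof (ln_le_sub_1 (INR m / (INR m + 1)) ltac:(apply Rdiv_lt_0_compat; lra)) as H.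
    rewrite ln_div in H by lra.
    replace (INR m / (INR m + 1) - 1) with (- / (INR m + 1)) in H by (field; lra). lra.
  - pose proof (ln_le_sub_1 ((INR m + 1) / INR m) ltac:(apply Rdiv_lt_0_compat; lra)) as H.
    rewrite ln_div in H by lra.
    replace ((INR m + 1) / INR m - 1) with (/ INR m) in H by (field; lra). lra.
Qed.

Lemma gamma_seq_succ x m : 0 < x -> (1 <= m)%nat ->
  gamma_seq x (S m) = gamma_seq x m * (INR (S m) * exp (x * log_gap m) / (x + INR (S m))).
Proof.
  intros Hx Hm. unfold gamma_seq, log_gap, Rpower. cbn [rising_prod].
  rewrite fact_simpl, mult_INR, Rmult_minus_distr_l, Rminus_def, exp_plus, exp_Ropp.
  pose proof (rising_prod_pos x m Hx). pose proof (exp_pos (x * ln (INR m))).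
  pose proof (INR_S_pos m). pose proof (lt_0_INR _ (lt_O_fact m)).
  field. repeat split; lra.
Qed.

Lemma gamma_seq_incr x m : 0 < x -> (1 <= m)%nat -> gamma_seq x m <= gamma_seq x (S m).
Proof.
  intros Hx Hm. rewrite gamma_seq_succ by assumption.
  pose proof (gamma_seq_pos x m Hx). pose proof (log_gap_bounds m Hm).
  pose proof (INR_S_pos m). set (N := INR (S m)) in *.
  assert (Hexp : 1 + x / N <= exp (x * log_gap m)).
  { eapply Rle_trans; [|apply exp_ineq1_le]. unfold Rdiv.
    apply Rplus_le_compat_l, Rmult_le_compat_l; lra. }
  rewrite <- (Rmult_1_r (gamma_seq x m)) at 1. apply Rmult_le_compat_l; [lra|].
  apply (Rmult_le_reg_r (x + N)); [lra|].
  replace (N * exp (x * log_gap m) / (x + N) * (x + N)) with (N * exp (x * log_gap m))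
    by (field; lra).
  replace (1 * (x + N)) with (N * (1 + x / N)) by (field; lra).
  apply Rmult_le_compat_l; lra.
Qed.

(* The factor [exp (4 / m)] compensates the growth [exp (x / m - x / (x + m + 1))] of
   the ratio [gamma_seq x (S m) / gamma_seq x m], as long as [x * (1 + x) <= 4]. *)
Lemma gamma_seq_exp_decr x m : 0 < x -> x * (1 + x) <= 4 -> (1 <= m)%nat ->
  gamma_seq x (S m) * exp (4 / INR (S m)) <= gamma_seq x m * exp (4 / INR m).
Proof.
  intros Hx Hx4 Hm. rewrite gamma_seq_succ by assumption.
  pose proof (gamma_seq_pos x m Hx). pose proof (log_gap_bounds m Hm).
  assert (HN : INR (S m) = INR m + 1) by apply S_INR.
  assert (H1 : 1 <= INR m) by (apply (le_INR 1); exact Hm).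
  set (N := INR (S m)) in *. set (M := INR m) in *.
  assert (E1 : exp (x * log_gap m) <= exp (x / M)).
  { apply exp_le_mono. unfold Rdiv. apply Rmult_le_compat_l; lra. }
  assert (E2 : N / (x + N) <= exp (- (x / (x + N)))).
  { replace (N / (x + N)) with (1 + - (x / (x + N))) by (field; lra). apply exp_ineq1_le. }
  assert (E3 : x / M - x / (x + N) + 4 / N <= 4 / M).
  { assert (Hq : 0 <= (4 * x + N * (4 - x * (1 + x))) / (M * N * (x + N))).
    { apply Rdiv_le_0_compat; [nra|].
      apply Rmult_lt_0_compat; [apply Rmult_lt_0_compat|]; lra. }
    replace ((4 * x + N * (4 - x * (1 + x))) / (M * N * (x + N)))
      with (4 / M - (x / M - x / (x + N) + 4 / N)) in Hq by (rewrite HN; field; lra).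
    lra. }
  replace (gamma_seq x m * (N * exp (x * log_gap m) / (x + N)) * exp (4 / N))
    with (gamma_seq x m * (N / (x + N) * exp (x * log_gap m) * exp (4 / N))) by (field; lra).
  apply Rmult_le_compat_l; [lra|].
  apply Rle_trans with (exp (- (x / (x + N))) * exp (x / M) * exp (4 / N)).
  - pose proof (exp_pos (4 / N)). pose proof (exp_pos (x * log_gap m)).
    apply Rmult_le_compat_r; [lra|].
    apply Rmult_le_compat; [apply Rdiv_le_0_compat; lra|lra|exact E2|exact E1].
  - rewrite <- !exp_plus. apply exp_le_mono. lra.
Qed.

Lemma gamma_seq_cv x : 0 < x -> x * (1 + x) <= 4 ->
  exists Gm, Un_cv (gamma_seq x) Gm /\ 0 < Gm.
Proof.
  intros Hx Hx4.
  set (g m := gamma_seq x (S m)).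
  assert (Hg : Un_growing g) by (intros m; apply gamma_seq_incr; [exact Hx|lia]).
  assert (Hub : forall m, g m <= gamma_seq x 1 * exp 4).
  { intros m. apply Rle_trans with (g m * exp (4 / INR (S m))).
    - pose proof (gamma_seq_pos x (S m) Hx).
      rewrite <- (Rmult_1_r (g m)) at 1. apply Rmult_le_compat_l; [unfold g; lra|].
      rewrite <- exp_0. apply exp_le_mono, Rdiv_le_0_compat; [lra|apply INR_S_pos].
    - induction m as [|m IH].
      + unfold g. simpl INR. rewrite Rdiv_1_r. lra.
      + eapply Rle_trans; [apply gamma_seq_exp_decr; [exact Hx|exact Hx4|lia]|exact IH]. }
  assert (Hb : has_ub g) by (exists (gamma_seq x 1 * exp 4); intros y [m ->]; apply Hub).
  destruct (growing_cv g Hg Hb) as [Gm HGm].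
  exists Gm. split.
  - apply is_lim_seq_Reals, is_lim_seq_incr_1, is_lim_seq_Reals, HGm.
  - pose proof (growing_ineq g Gm Hg HGm 0). pose proof (gamma_seq_pos x 1 Hx).
    unfold g in *. lra.
Qed.

Lemma growth_gamma_seq x m : 0 < x ->
  growth (x - 1) m = Rpower (INR m) x / ((x + INR m) * gamma_seq x m).
Proof.
  intros Hx.
  assert (Hrising : growth (x - 1) m = rising_prod x m / ((x + INR m) * INR (fact m))).
  { induction m as [|m IH]; [simpl; field; lra|].
    cbn [growth rising_prod]. rewrite IH, fact_simpl, mult_INR, S_INR.
    pose proof (lt_0_INR _ (lt_O_fact m)). pose proof (pos_INR m).
    field. repeat split; lra. }
  rewrite Hrising. unfold gamma_seq.
  pose proof (lt_0_INR _ (lt_O_fact m)). pose proof (exp_pos (x * ln (INR m))).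
  pose proof (rising_prod_pos x m Hx). pose proof (pos_INR m).
  unfold Rpower. field. repeat split; lra.
Qed.

Lemma growth_neg_abs_le x m : 0 < x < 2 -> Rabs (growth (- x - 1) (S m)) <= 2 / INR (S m).
Proof.
  intros Hx. induction m as [|m IH].
  - cbn [growth]. replace (1 * (1 + (- x - 1) / INR 1)) with (- x) by (simpl; field).
    rewrite Rabs_Ropp, Rabs_pos_eq by lra. simpl. lra.
  - cbn [growth] in IH |- *. set (M := INR (S m)) in *.
    assert (HN : INR (S (S m)) = M + 1) by apply S_INR.
    assert (HM : 1 <= M) by (apply (le_INR 1); lia).
    replace (1 + (- x - 1) / INR (S (S m))) with ((M - x) / (M + 1))
      by (rewrite HN; field; lra).
    rewrite Rabs_mult, Rabs_div, (Rabs_pos_eq (M + 1)), HN by lra.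
    apply Rle_trans with (2 / M * ((M - 0) / (M + 1))).
    + apply Rmult_le_compat; [apply Rabs_pos| |exact IH|].
      { apply Rdiv_le_0_compat; [apply Rabs_pos|lra]. }
      unfold Rdiv. apply Rmult_le_compat_r; [left; apply Rinv_0_lt_compat; lra|].
      apply Rabs_le. lra.
    + right. field. lra.
Qed.

Lemma is_lim_seq_inv_S : is_lim_seq (fun n => / INR (S n)) 0.
Proof.
  apply (is_lim_seq_incr_1 (fun n => / INR n)).
  replace (Finite 0) with (Rbar_inv p_infty) by reflexivity.
  apply is_lim_seq_inv; [apply is_lim_seq_INR|discriminate].
Qed.

Lemma Rpower_succ_ratio x m : (1 <= m)%nat ->
  Rpower (INR m) x / Rpower (INR (S m)) (x - 1) = INR (S m) / exp (x * log_gap m).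
Proof.
  intros Hm. unfold Rpower, log_gap.
  rewrite <- (exp_ln (INR (S m))) at 2 by apply INR_S_pos.
  unfold Rdiv. rewrite <- !exp_Ropp, <- !exp_plus. f_equal. ring.
Qed.

Lemma power_ratio_lim x : 0 < x ->
  is_lim_seq (fun m => Rpower (INR (S m)) x
                       / ((x + INR (S m)) * Rpower (INR (S (S m))) (x - 1))) 1.
Proof.
  intros Hx.
  apply (is_lim_seq_ext (fun m => (1 + / INR (S m)) / (x * / INR (S m) + 1)
                                  / exp (x * log_gap (S m)))).
  { intros m. pose proof (INR_S_pos m) as HM.
    pose proof (Rpower_succ_ratio x (S m) ltac:(lia)) as Hratio.
    set (P := Rpower (INR (S (S m))) (x - 1)) in *.
    set (E := exp (x * log_gap (S m))) in *.
    assert (HP : 0 < P) by apply exp_pos. assert (HE : 0 < E) by apply exp_pos.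
    replace (Rpower (INR (S m)) x) with (INR (S (S m)) / E * P)
      by (rewrite <- Hratio; field; lra).
    rewrite (S_INR (S m)). field. repeat split; lra. }
  replace (Finite 1) with (Finite ((1 + 0) / (x * 0 + 1) / exp (x * 0)))
    by (f_equal; rewrite Rmult_0_r, exp_0; field).
  apply is_lim_seq_div'; [apply is_lim_seq_div'| |apply Rgt_not_eq, exp_pos].
  - apply is_lim_seq_plus'; [apply is_lim_seq_const|apply is_lim_seq_inv_S].
  - apply is_lim_seq_plus'; [|apply is_lim_seq_const].
    apply is_lim_seq_mult'; [apply is_lim_seq_const|apply is_lim_seq_inv_S].
  - rewrite Rmult_0_r. lra.
  - apply (filterlim_comp _ _ _ (fun m => x * log_gap (S m)) exp _ (locally (x * 0)));
      [|apply continuous_exp].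
    apply (is_lim_seq_mult' (fun _ => x)); [apply is_lim_seq_const|].
    apply (is_lim_seq_le_le (fun _ => 0) _ (fun m => / INR (S m))).
    + intros m. pose proof (log_gap_bounds (S m) ltac:(lia)).
      pose proof (Rinv_0_lt_compat _ (INR_S_pos (S m))). lra.
    + apply is_lim_seq_const.
    + apply is_lim_seq_inv_S.
Qed.

Lemma Rpower_ge_1 a b : 1 <= a -> 0 <= b -> 1 <= Rpower a b.
Proof. intros Ha Hb. rewrite <- (Rpower_O a) by lra. now apply Rle_Rpower. Qed.

Lemma growth_combination_equiv x c d (Gm : R) : 1 <= x < 2 -> c <> 0 ->
  is_lim_seq (gamma_seq x) Gm -> 0 < Gm ->
  is_lim_seq (fun m => (c * growth (x - 1) m - d * growth (- x - 1) m)
                       / (c * Rpower (INR (S m)) (x - 1) / Gm)) 1.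
Proof.
  intros Hx Hc HG HGm. apply is_lim_seq_incr_1.
  set (P m := Rpower (INR (S (S m))) (x - 1)).
  assert (HP : forall m, 1 <= P m)
    by (intros m; apply Rpower_ge_1; [apply (le_INR 1); lia|lra]).
  apply (is_lim_seq_ext (fun m => Gm / gamma_seq x (S m)
      * (Rpower (INR (S m)) x / ((x + INR (S m)) * P m))
      - d / c * Gm * (growth (- x - 1) (S m) / P m))).
  { intros m. rewrite (growth_gamma_seq x) by lra. fold (P m).
    pose proof (gamma_seq_pos x (S m) ltac:(lra)). pose proof (INR_S_pos m).
    specialize (HP m). field. repeat split; lra. }
  replace (Finite 1) with (Finite (Gm / Gm * 1 - d / c * Gm * 0)) by (f_equal; field; lra).
  apply is_lim_seq_minus'; [apply is_lim_seq_mult'|apply is_lim_seq_mult'].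
  - apply is_lim_seq_div'; [apply is_lim_seq_const| |lra].
    exact (proj1 (is_lim_seq_incr_1 _ _) HG).
  - apply power_ratio_lim. lra.
  - apply is_lim_seq_const.
  - apply is_lim_seq_abs_0.
    apply (is_lim_seq_le_le (fun _ => 0) _ (fun m => 2 * / INR (S m))).
    + intros m. split; [apply Rabs_pos|].
      pose proof (growth_neg_abs_le x m ltac:(lra)) as Hneg. specialize (HP m).
      unfold Rdiv. rewrite Rabs_mult, Rabs_inv, (Rabs_pos_eq (P m)) by lra.
      apply Rle_trans with (Rabs (growth (- x - 1) (S m)) * 1).
      * apply Rmult_le_compat_l; [apply Rabs_pos|].
        rewrite <- Rinv_1. apply Rinv_le_contravar; lra.
      * rewrite Rmult_1_r. exact Hneg.
    + apply is_lim_seq_const.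
    + rewrite <- (Rmult_0_r 2).
      apply is_lim_seq_mult'; [apply is_lim_seq_const|apply is_lim_seq_inv_S].
Qed.

Theorem ED_asymptotic : exists GammaSqrt2 : R,
  Un_cv (gamma_seq (sqrt 2)) GammaSqrt2 /\
  Un_cv (fun n => ED n / ((1 + sqrt 2) / 2 * Rpower (INR n) (sqrt 2 - 1) / GammaSqrt2)) 1.
Proof.
  set (r := sqrt 2).
  assert (Hr : r * r = 2) by (apply sqrt_sqrt; lra).
  assert (Hr0 : 0 < r) by (apply sqrt_lt_R0; lra).
  destruct (gamma_seq_cv r Hr0 ltac:(nra)) as (Gm & HG & HGm).
  exists Gm. split; [exact HG|].
  apply is_lim_seq_Reals, is_lim_seq_incr_1.
  apply (is_lim_seq_ext (fun m =>
    ((1 + r) / 2 * growth (r - 1) m - (r - 1) / 2 * growth (- r - 1) m)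
    / ((1 + r) / 2 * Rpower (INR (S m)) (r - 1) / Gm))).
  { intros m. now rewrite ED_growth. }
  apply growth_combination_equiv; [nra|lra|now apply is_lim_seq_Reals|exact HGm].
Qed.

Theorem mainTheorem8 :
  (forall n : nat, (1 <= n)%nat ->
     ED n = (1 + sqrt 2) / 2 * gbinom (INR n + sqrt 2 - 2) (n - 1)
            - (sqrt 2 - 1) / 2 * gbinom (INR n - sqrt 2 - 2) (n - 1))
  /\
  (exists GammaSqrt2 : R,
     Un_cv (gamma_seq (sqrt 2)) GammaSqrt2 /\
     Un_cv (fun n => ED n /
              ((1 + sqrt 2) / 2 * Rpower (INR n) (sqrt 2 - 1) / GammaSqrt2)) 1).
Proof. split; [exact ED_closed_form|exact ED_asymptotic]. Qed.
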